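(* Let $(x_k)_{k\ge1}$ be a sequence of non-negative reals and let $M$ be the strongest-first counting function defined in the context. Then: (1) for every fixed $t\ge1$, the map $s\mapsto M(t,(x_k)_{k=1}^t,s)$ is non-decreasing on $[0,\infty)$; (2) for every fixed $s\ge0$ and all integers $1\le t_1\le t_2$, the map $t\mapsto M(t,(x_k)_{k=1}^t,s)$ is cap-unimodal on $\{t_1,\dots,t_2\}$; in particular $\min_{t_1\le t\le t_2}M(t,(x_k)_{k=1}^t,s)=\min\{M(t_1,(x_k)_{k=1}^{t_1},s),M(t_2,(x_k)_{k=1}^{t_2},s)\}$; (3) for every fixed $s\ge0$ and all integers $1\le t_1\le t_2$, $\max_{t_1\le t\le t_2}M(t,(x_k)_{k=1}^t,s)\le t_2-t_1+M(t_1,(x_k)_{k=1}^{t_1},s)$.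
   Context: For $t\ge1$ and $(x_k)_{k=1}^t\in[0,\infty)^t$ let $x_{1,t}\le x_{2,t}\le\dots\le x_{t,t}$ be the increasing rearrangement (order statistics). The strongest-first counting function is $M(0,\varnothing,s)=0$ and, for $t\ge1$, $M(t,(x_k)_{k=1}^t,s)=0$ if $x_{t,t}>s$, and otherwise $M(t,(x_k)_{k=1}^t,s)=\max\{1\le k\le t:\sum_{j=t-k+1}^{t}x_{j,t}\le s\}$ (the maximal number of largest values which, starting with the biggest, can be summed without exceeding $s$). A function $h$ on an integer interval $\{t_1,\dots,t_2\}$ is called cap-unimodal if it is either monotone, or there is $t^*$ in the interval such that $h$ is non-decreasing on $\{t_1,\dots,t^*\}$ and non-increasing on $\{t^*,\dots,t_2\}$. *)

(* the statement is purely order-theoretic, so it is stated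
   for an arbitrary real field R (which includes the real numbers). *)
From HB Require Import structures.
From mathcomp Require Import all_boot all_order all_algebra.
Set Implicit Arguments. Unset Strict Implicit. Unset Printing Implicit Defensive.
Import Order.TTheory GRing.Theory Num.Theory.
Local Open Scope ring_scope.

(* Increasing rearrangement of (x_1, ..., x_t):
   nth 0 (ostat t x) (j-1) is the order statistic x_{j,t}, 1 <= j <= t. *)
Definition ostat {R : realFieldType} (t : nat) (x : nat -> R) : seq R :=
  sort <=%R [seq x k | k <- iota 1 t].

(* Strongest-first counting function M(t, (x_k)_{k=1}^t, s).
   The sum over j = t-k+1 .. t of x_{j,t} is the sum over 0-based indices
   t-k <= j < t of the sorted list. *)
Definition Mcount {R : realFieldType} (t : nat) (x : nat -> R) (s : R) : nat :=
  if t == 0%N then 0%N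
  else if s < nth 0 (ostat t x) t.-1 then 0%N
  else \max_(1 <= k < t.+1 | \sum_(t - k <= j < t) nth 0 (ostat t x) j <= s) k.

Definition cap_unimodal (h : nat -> nat) (t1 t2 : nat) : Prop :=
  (forall a b, (t1 <= a)%N -> (a <= b)%N -> (b <= t2)%N -> (h a <= h b)%N)
  \/ (forall a b, (t1 <= a)%N -> (a <= b)%N -> (b <= t2)%N -> (h b <= h a)%N)
  \/ (exists2 ts, (t1 <= ts <= t2)%N &
        (forall a b, (t1 <= a)%N -> (a <= b)%N -> (b <= ts)%N -> (h a <= h b)%N) /\
        (forall a b, (ts <= a)%N -> (a <= b)%N -> (b <= t2)%N -> (h b <= h a)%N)).

From HB Require Import structures.
From mathcomp Require Import all_boot all_order all_algebra.
From mathcomp Require Import zify.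
Set Implicit Arguments. Unset Strict Implicit. Unset Printing Implicit Defensive.
Import Order.TTheory GRing.Theory Num.Theory.

(* Write M_t := Mcount t x s and let S_t(k) be the sum of the k largest among
   x_1, ..., x_t, so that for 1 <= k <= t we have k <= M_t iff S_t(k) <= s.
   Since x >= 0, S_t(k) is non-decreasing in k, and inserting x_{t+1} into
   the sorted list can only push every order statistic up one place, so
   S_t(k) <= S_{t+1}(k).  This yields, for every s,
     (a) M_t <= t,   (b) M_{t+1} <= M_t + 1,   (c) M_t < t -> M_{t+1} <= M_t,
   and monotonicity of M_t in s follows directly from the characterisation.
   The rest is combinatorics of integer sequences: (a) and (c) force any
   h : nat -> nat to stay on the diagonal h t = t for an initial stretch and
   to be non-increasing after it has left the diagonal, so h rises up to a
   peak and then falls, whence cap-unimodality and the minimum on an interval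
   is attained at an endpoint; (b) alone bounds the maximum. *)

Lemma chain_up (h : nat -> nat) lo hi :
  (forall t, lo <= t -> t < hi -> h t <= h t.+1) ->
  forall a b, lo <= a -> a <= b -> b <= hi -> h a <= h b.
Proof.
move=> step a b lo_a; elim: b => [|b IH]; first by rewrite leqn0 => /eqP ->.
rewrite leq_eqVlt ltnS => /orP [/eqP -> //| a_b] b_hi.
exact: leq_trans (IH a_b (ltnW b_hi)) (step _ (leq_trans lo_a a_b) b_hi).
Qed.

Lemma chain_down (h : nat -> nat) lo hi :
  (forall t, lo <= t -> t < hi -> h t.+1 <= h t) ->
  forall a b, lo <= a -> a <= b -> b <= hi -> h b <= h a.
Proof.
move=> step a b lo_a; elim: b => [|b IH]; first by rewrite leqn0 => /eqP ->.
rewrite leq_eqVlt ltnS => /orP [/eqP -> //| a_b] b_hi.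
exact: leq_trans (step _ (leq_trans lo_a a_b) b_hi) (IH a_b (ltnW b_hi)).
Qed.

Section CapUnimodal.

Variable h : nat -> nat.
Hypothesis h_le_id : forall t, h t <= t.
Hypothesis h_below_dec : forall t, h t < t -> h t.+1 <= h t.

Lemma below_persists a b : a <= b -> h a < a -> h b < b.
Proof.
move=> a_b below_a; elim: b a_b => [|b IH]; first by rewrite leqn0 => /eqP <-.
rewrite leq_eqVlt ltnS => /orP [/eqP <- //| a_b].
by have := h_below_dec (IH a_b); have := IH a_b; lia.
Qed.

(* Such a sequence rises up to a peak ts and falls afterwards on every
   interval: ts is the last point of the interval on the diagonal. *)
Lemma cap_peak t1 t2 : t1 <= t2 -> exists2 ts, t1 <= ts <= t2 &
  (forall t, t1 <= t -> t < ts -> h t <= h t.+1) /\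
  (forall t, ts <= t -> t < t2 -> h t.+1 <= h t).
Proof.
move=> t12; pose P t := (t == t1) || (t <= t2) && (h t == t).
have P_t1 : exists t, P t by exists t1; rewrite /P eqxx.
have P_le : forall t, P t -> t <= t2 by move=> t /orP [/eqP -> | /andP []].
case: (ex_maxnP P_t1 P_le) => ts P_ts ts_max.
exists ts; first by rewrite ts_max ?P_le // /P eqxx.
split=> t t_lo t_hi.
- have diag_ts : h ts = ts.
    case/orP: P_ts => [/eqP ts1 | /andP [_ /eqP]] //.
    by rewrite ts1 ltnNge t_lo in t_hi.
  have diag u : u <= ts -> h u = u.
    move=> u_ts; apply/eqP; rewrite eqn_leq h_le_id leqNgt /=; apply/negP => below.
    by have := below_persists u_ts below; rewrite diag_ts ltnn.
  by rewrite (diag _ (ltnW t_hi)) (diag _ t_hi).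
- have below_next : h t.+1 < t.+1.
    rewrite ltn_neqAle h_le_id andbT; apply/negP => /eqP diag.
    by have := ts_max t.+1; rewrite /P t_hi diag eqxx orbT ltnNge t_lo => /(_ isT).
  case: (ltngtP (h t) t) => [below | | -> ]; first exact: h_below_dec.
    by rewrite ltnNge h_le_id.
  by rewrite -ltnS.
Qed.
End CapUnimodal.

Lemma geq_bigmin_idx (I : Type) (r : seq I) (F : I -> nat) idx :
  \big[minn/idx]_(i <- r) F i <= idx.
Proof. by elim/big_rec: _ => // i m _ m_idx; rewrite geq_min m_idx orbT. Qed.

Lemma geq_bigmin_mem (I : eqType) (r : seq I) (F : I -> nat) idx i :
  i \in r -> \big[minn/idx]_(j <- r) F j <= F i.
Proof.
elim: r => // j r IH; rewrite in_cons big_cons => /orP [/eqP <-|/IH le_i].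
  exact: geq_minl.
by rewrite geq_min le_i orbT.
Qed.

Lemma peak_cap_unimodal (h : nat -> nat) t1 ts t2 : t1 <= ts <= t2 ->
  (forall t, t1 <= t -> t < ts -> h t <= h t.+1) ->
  (forall t, ts <= t -> t < t2 -> h t.+1 <= h t) ->
  cap_unimodal h t1 t2 /\
  \big[minn/h t1]_(t1 <= t < t2.+1) h t = minn (h t1) (h t2).
Proof.
move=> /andP [t1_ts ts_t2] /chain_up up /chain_down down; split.
  right; right; exists ts; first by rewrite t1_ts.
  by split=> a b; [apply: up|apply: down].
apply/eqP; rewrite eqn_leq; apply/andP; split.
  rewrite leq_min geq_bigmin_idx geq_bigmin_mem //.
  by rewrite mem_index_iota ltnS leqnn andbT (leq_trans t1_ts).
rewrite big_seq; apply: (big_ind (fun m => minn (h t1) (h t2) <= m)) => //.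
- exact: geq_minl.
- by move=> a b ha hb; rewrite leq_min ha hb.
move=> t; rewrite mem_index_iota ltnS => /andP [t1_t t_t2].
case: (leqP t ts) => [t_ts | /ltnW ts_t].
  exact: leq_trans (geq_minl _ _) (up _ _ (leqnn _) t1_t t_ts).
exact: leq_trans (geq_minr _ _) (down _ _ ts_t t_t2 (leqnn _)).
Qed.

Lemma bigmax_unit_steps (h : nat -> nat) t1 t2 :
  (forall t, h t.+1 <= (h t).+1) -> t1 <= t2 ->
  \max_(t1 <= t < t2.+1) h t <= t2 - t1 + h t1.
Proof.
move=> step t12.
have grow t : t1 <= t -> h t <= t - t1 + h t1.
  elim: t => [|t IH]; first by rewrite leqn0 => /eqP ->.
  rewrite leq_eqVlt ltnS => /orP [/eqP <- | t1_t]; first by rewrite subnn.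
  by have := step t; have := IH t1_t; lia.
apply/bigmax_leqP_seq => t; rewrite mem_index_iota ltnS => /andP [t1_t t_t2] _.
by apply: leq_trans (grow _ t1_t) _; rewrite leq_add2r leq_sub2r.
Qed.

Local Open Scope ring_scope.

(* Otherwise at least j+2 entries of u but at most j+1 entries of a :: s
   would lie below u_{j+1}, contradicting u being a permutation of a :: s. *)
Section InsertSorted.
Variables (d : Order.disp_t) (T : orderType d) (x0 : T).
Local Open Scope order_scope.

Lemma sorted_insert_dominates (s u : seq T) a :
  sorted <=%O s -> sorted <=%O u -> perm_eq u (a :: s) ->
  forall j, (j < size s)%N -> nth x0 s j <= nth x0 u j.+1.
Proof.
move=> s_sorted u_sorted u_perm j j_lt.
have size_u : size u = (size s).+1 by rewrite (perm_size u_perm).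
rewrite leNgt; apply/negP => u_lt_s.
pose v := nth x0 u j.+1; pose below y := y <= v.
have count_u : (j.+2 <= count below u)%N.
  rewrite -(cat_take_drop j.+2 u) count_cat; apply: leq_trans (leq_addr _ _).
  have all_below : all below (take j.+2 u).
    apply/allP => y /(nthP x0) [i]; rewrite size_takel ?size_u // => i_lt <-.
    rewrite nth_take // /below /v.
    apply: (sorted_leq_nth le_trans lexx x0 u_sorted);
      by rewrite ?inE ?size_u // (leq_trans i_lt).
  by move: all_below; rewrite all_count => /eqP ->; rewrite size_takel ?size_u.
have count_s : (count below s <= j)%N.
  rewrite -(cat_take_drop j s) count_cat.
  have /eqP -> : count below (drop j s) == 0%N.
    rewrite -leqn0 leqNgt -has_count; apply/hasPn => y /(nthP x0) [i].
    rewrite size_drop nth_drop /below -ltNge => i_lt <-; apply: lt_le_trans u_lt_s _.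
    apply: (sorted_leq_nth le_trans lexx x0 s_sorted);
      by rewrite ?inE ?leq_addr // -ltn_subRL.
  rewrite addn0 (leq_trans (count_size _ _)) // size_take.
  by case: ifP => // /negbT; rewrite -leqNgt.
move: count_u; rewrite (permP u_perm) /= => count_u.
by have := leq_trans count_u (leq_add (leq_b1 _) count_s); rewrite add1n ltnn.
Qed.
End InsertSorted.

(* S_t(k): the sum of the k largest values among x_1, ..., x_t, i.e. the sum
   tested in the definition of Mcount. *)
Definition top_sum {R : realFieldType} (x : nat -> R) (t k : nat) : R :=
  \sum_(t - k <= j < t) nth 0 (ostat t x) j.

Section StrongestFirst.
Variables (R : realFieldType) (x : nat -> R).

Lemma size_ostat t : size (ostat t x) = t.
Proof. by rewrite size_sort size_map size_iota. Qed.

Lemma sorted_ostat t : sorted <=%R (ostat t x).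
Proof. exact/sort_sorted/le_total. Qed.

Lemma perm_ostatS t : perm_eq (ostat t.+1 x) (x t.+1 :: ostat t x).
Proof.
rewrite /ostat.
have -> : iota 1 t.+1 = rcons (iota 1 t) t.+1 by rewrite -cats1 -(addn1 t) iotaD addnC.
rewrite map_rcons perm_sort perm_rcons perm_cons.
by rewrite perm_sym perm_sort.
Qed.

Lemma ostat_le_ostatS t j : (j < t)%N -> nth 0 (ostat t x) j <= nth 0 (ostat t.+1 x) j.+1.
Proof.
move=> j_lt; apply: (sorted_insert_dominates _ _ _ (perm_ostatS t));
  by rewrite ?sorted_ostat ?size_ostat.
Qed.

Lemma top_sum1 t : (1 <= t)%N -> top_sum x t 1 = nth 0 (ostat t x) t.-1.
Proof. by case: t => // t _; rewrite /top_sum subn1 big_nat1. Qed.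

Lemma top_sum_succ t k : (k <= t)%N -> top_sum x t k <= top_sum x t.+1 k.
Proof.
move=> k_le; rewrite /top_sum subSn // -addn1 big_addn subn1 /=.
by apply: ler_sum_nat => j /andP [_ j_lt]; rewrite addn1 ostat_le_ostatS.
Qed.

Hypothesis x_ge0 : forall k, (1 <= k)%N -> 0 <= x k.

Lemma ostat_ge0 t j : 0 <= nth 0 (ostat t x) j.
Proof.
have [j_lt | j_ge] := ltnP j (size (ostat t x)); last by rewrite nth_default.
have := mem_nth 0 j_lt; rewrite mem_sort => /mapP [k].
by rewrite mem_iota => /andP [k_ge1 _] ->; apply: x_ge0.
Qed.

Lemma top_sum_mono t k k' : (k <= k')%N -> top_sum x t k <= top_sum x t k'.
Proof.
move=> k_le; rewrite /top_sum [leRHS](big_cat_nat _ (n := t - k)) /=.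
- by rewrite lerDr sumr_ge0 // => j _; apply: ostat_ge0.
- by rewrite leq_sub2l.
- by rewrite leq_subr.
Qed.

Lemma Mcount_le t s : (Mcount t x s <= t)%N.
Proof.
rewrite /Mcount; case: eqP => // _; case: ifP => // _.
by apply/bigmax_leqP_seq => k; rewrite mem_index_iota ltnS => /andP [].
Qed.

Lemma top_sum_Mcount t s : (1 <= Mcount t x s)%N -> top_sum x t (Mcount t x s) <= s.
Proof.
rewrite /Mcount; case: eqP => // _; case: ifP => // _.
elim/big_rec: _ => // k m k_fits IH; rewrite /maxn.
by case: (ltnP k m).
Qed.

Lemma Mcount_geP t s k : (1 <= k <= t)%N -> (k <= Mcount t x s)%N = (top_sum x t k <= s).
Proof.
case/andP=> k_ge1 k_le; apply/idP/idP => [k_le_M | k_fits].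
  apply: le_trans (top_sum_Mcount _) => //; last exact: leq_trans k_le_M.
  exact: top_sum_mono.
have t_ge1 := leq_trans k_ge1 k_le.
rewrite /Mcount gtn_eqF // -top_sum1 // ltNge (le_trans (top_sum_mono _ k_ge1) k_fits) /=.
by apply: (leq_bigmax_seq (F := id)); rewrite // mem_index_iota k_ge1 ltnS.
Qed.

Lemma Mcount_mono t s1 s2 : s1 <= s2 -> (Mcount t x s1 <= Mcount t x s2)%N.
Proof.
move=> s12; case M1: (Mcount t x s1) => [//|m]; rewrite -M1.
have M1_ge1 : (1 <= Mcount t x s1)%N by rewrite M1.
rewrite Mcount_geP ?M1_ge1 ?Mcount_le //.
exact: le_trans (top_sum_Mcount M1_ge1) s12.
Qed.

(* One new value raises the count by at most one, since S_t <= S_{t+1}. *)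
Lemma Mcount_succ_le t s : (Mcount t.+1 x s <= (Mcount t x s).+1)%N.
Proof.
case M1: (Mcount t.+1 x s) => [|[|m]] //; rewrite ltnS.
have m_le : (m.+1 <= t)%N by rewrite -ltnS -M1 Mcount_le.
rewrite Mcount_geP ?m_le //; apply: le_trans (top_sum_succ m_le) _.
apply: le_trans (top_sum_mono _ (leqnSn m.+1)) _.
by rewrite -M1 top_sum_Mcount ?M1.
Qed.

Lemma Mcount_succ_below t s : (Mcount t x s < t)%N -> (Mcount t.+1 x s <= Mcount t x s)%N.
Proof.
move=> M_lt; rewrite leqNgt; apply/negP => M_grows.
have fits : top_sum x t.+1 (Mcount t x s).+1 <= s.
  by rewrite -Mcount_geP //; apply: ltnW.
suff : ((Mcount t x s).+1 <= Mcount t x s)%N by rewrite ltnn.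
by rewrite Mcount_geP ?M_lt //; apply: le_trans (top_sum_succ M_lt) fits.
Qed.
End StrongestFirst.

Theorem mainTheorem1 (R : realFieldType) (x : nat -> R)
    (hx : forall k : nat, (1 <= k)%N -> 0 <= x k) :
  (* (1) monotonicity in s *)
  (forall (t : nat) (s1 s2 : R), (1 <= t)%N -> 0 <= s1 -> s1 <= s2 ->
     (Mcount t x s1 <= Mcount t x s2)%N) /\
  (* (2) cap-unimodality in t, and the minimum is attained at an endpoint *)
  (forall (s : R) (t1 t2 : nat), 0 <= s -> (1 <= t1)%N -> (t1 <= t2)%N ->
     cap_unimodal (fun t => Mcount t x s) t1 t2 /\
     \big[minn/Mcount t1 x s]_(t1 <= t < t2.+1) Mcount t x s
       = minn (Mcount t1 x s) (Mcount t2 x s)) /\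
  (* (3) bound on the maximum *)
  (forall (s : R) (t1 t2 : nat), 0 <= s -> (1 <= t1)%N -> (t1 <= t2)%N ->
     (\max_(t1 <= t < t2.+1) Mcount t x s <= t2 - t1 + Mcount t1 x s)%N).
Proof.
split; [|split].
- by move=> t s1 s2 _ _; apply: (Mcount_mono hx).
- move=> s t1 t2 _ _ t12.
  have [ts ts_range [rise fall]] :=
    cap_peak (fun t => Mcount_le x t s) (fun t => Mcount_succ_below hx (s := s)) t12.
  exact: peak_cap_unimodal ts_range rise fall.
- move=> s t1 t2 _ _; apply: bigmax_unit_steps => t.
  exact: (Mcount_succ_le hx).
Qed.
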